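(* For every base $\mathcal{B}$, atomic multiset $L$, nonempty finite multiset $\Gamma$ of ILL formulae and ILL formula $\varphi$: $\Gamma\Vdash^L_{\mathcal{B}}\varphi$ if and only if for every base $\mathcal{C}\supseteq\mathcal{B}$ and every atomic multiset $K$, $\Vdash^K_{\mathcal{C}}\Gamma$ implies $\Vdash^{L,K}_{\mathcal{C}}\varphi$.
   Context: Fix a set $\mathbb{A}$ of propositional atoms. ILL formulae: $\phi ::= p\in\mathbb{A} \mid \top \mid 0 \mid 1 \mid \phi\multimap\phi \mid \phi\otimes\phi \mid \phi\,\&\,\phi \mid \phi\oplus\phi \mid\ !\phi$. All multisets are finite; ''$\Gamma,\Delta$'' denotes multiset union. Atomic rules and bases: an atomic sequent is $P\Rightarrow p$ with $P$ a multiset of atoms, $p$ an atom. An atomic box is a multiset of atomic sequents. An atomic rule is a triple $\langle\mathbf{A},\mathbf{S},p\rangle$ with $\mathbf{A}$ a multiset of atomic boxes, $\mathbf{S}$ an atomic box, $p$ an atom. A base is a set of atomic rules. An atom $p$ is persistent in $\mathcal{B}$ if some $\langle\varnothing,\mathbf{S},p\rangle\in\mathcal{B}$ has $\mathbf{S}\neq\varnothing$. Derivability $\vdash_{\mathcal{B}}$: (Ref) $p\vdash_{\mathcal{B}}p$; (App) if $\langle\mathbf{A},\mathbf{S},p\rangle\in\mathcal{B}$ with $\mathbf{A}=\{\mathbf{T}_1,\dots,\mathbf{T}_m\}$, and there are atomic multisets $C_1,\dots,C_n$ ($n\ge m$) and a multiset $D=\{d_{m+1},\dots,d_n\}$ of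 atoms persistent in $\mathcal{B}$ such that $C_i,Q\vdash_{\mathcal{B}}q$ for every $i\le m$ and every $Q\Rightarrow q\in\mathbf{T}_i$, $C_j\vdash_{\mathcal{B}}d_j$ for every $m<j\le n$, and $D,U\vdash_{\mathcal{B}}v$ for every $U\Rightarrow v\in\mathbf{S}$, then $C_1,\dots,C_n\vdash_{\mathcal{B}}p$. Support $\Vdash^L_{\mathcal{B}}$ (base $\mathcal{B}$, atomic multiset $L$), by induction on formulae: $\Vdash^L_{\mathcal{B}}p$ iff $L\vdash_{\mathcal{B}}p$; $\Vdash^L_{\mathcal{B}}\varphi\multimap\psi$ iff $\varphi\Vdash^L_{\mathcal{B}}\psi$; $\Vdash^L_{\mathcal{B}}\varphi\otimes\psi$ iff for all $\mathcal{C}\supseteq\mathcal{B}$, atomic $K$, atoms $p$: if $\varphi,\psi\Vdash^K_{\mathcal{C}}p$ then $\Vdash^{L,K}_{\mathcal{C}}p$; $\Vdash^L_{\mathcal{B}}1$ iff for all $\mathcal{C}\supseteq\mathcal{B}$, $K$, $p$: if $\Vdash^K_{\mathcal{C}}p$ then $\Vdash^{L,K}_{\mathcal{C}}p$; $\Vdash^L_{\mathcal{B}}\varphi\&\psi$ iff $\Vdash^L_{\mathcal{B}}\varphi$ and $\Vdash^L_{\mathcal{B}}\psi$; $\Vdash^L_{\mathcal{B}}\varphi\oplus\psi$ iff for all $\mathcal{C}\supseteq\mathcal{B}$, $K$, $p$: if $\varphi\Vdash^K_{\mathcal{C}}p$ and $\psi\Vdash^K_{\mathcal{C}}p$ then $\Vdash^{L,K}_{\mathcal{C}}p$;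 $\Vdash^L_{\mathcal{B}}0$ iff $\Vdash^{L,K}_{\mathcal{B}}p$ for all atoms $p$ and atomic $K$; $\Vdash^L_{\mathcal{B}}\top$ always; $\Vdash^L_{\mathcal{B}}!\varphi$ iff for all $\mathcal{C}\supseteq\mathcal{B}$, $K$, $p$: if (for all $\mathcal{D}\supseteq\mathcal{C}$, $\Vdash^{\varnothing}_{\mathcal{D}}\varphi$ implies $\Vdash^K_{\mathcal{D}}p$) then $\Vdash^{L,K}_{\mathcal{C}}p$. For nonempty multisets: $\Vdash^L_{\mathcal{B}}\Gamma,\Delta$ iff $L=K,M$ with $\Vdash^K_{\mathcal{B}}\Gamma$ and $\Vdash^M_{\mathcal{B}}\Delta$. For a nonempty antecedent written $!\Delta,\Theta$, where $!\Delta$ collects the formulae with top-level connective $!$ (with $\Delta$ the formulae under those $!$) and $\Theta$ contains none: $!\Delta,\Theta\Vdash^L_{\mathcal{B}}\varphi$ iff for all $\mathcal{C}\supseteq\mathcal{B}$ and atomic $K$, if $\Vdash^{\varnothing}_{\mathcal{C}}\delta$ for every $\delta\in\Delta$ and $\Vdash^K_{\mathcal{C}}\Theta$ then $\Vdash^{L,K}_{\mathcal{C}}\varphi$ (when $\Theta$ is empty, $K$ is empty). An empty antecedent: $\varnothing\Vdash^L_{\mathcal{B}}\varphi$ means $\Vdash^L_{\mathcal{B}}\varphi$. *)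

(* atoms are an arbitrary type A; finite multisets are lists,
   taken up to permutation (Permutation) wherever multiset equality matters. *)
From Stdlib Require Import List Permutation.
Import ListNotations.
Set Implicit Arguments.

Section ILL.
Variable A : Type.

Inductive formula : Type :=
| Atom : A -> formula
| Top : formula
| Zero : formula
| One : formula
| Lolli : formula -> formula -> formula
| Tensor : formula -> formula -> formula
| With : formula -> formula -> formula
| Plus : formula -> formula -> formula
| Bang : formula -> formula.

Definition asequent : Type := (list A * A)%type.
Definition abox : Type := list asequent.

Record arule : Type := ARule {
  r_prem : list abox;
  r_box  : abox;
  r_head : A
}.

Definition base : Type := arule -> Prop.

Definition base_ext (C B : base) : Prop := forall r, B r -> C r.

Definition persistent (B : base) (p : A) : Prop :=
  exists S, B (ARule [] S p) /\ S <> [].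

Inductive derives (B : base) : list A -> A -> Prop :=
| der_ref : forall p, derives B [p] p
| der_app : forall (As : list abox) (S : abox) (p : A)
    (Cs1 Cs2 : list (list A)) (Ds : list A) (L : list A),
    B (ARule As S p) ->
    Forall2 (fun (Ci : list A) (Ti : abox) =>
               forall Q q, In (Q, q) Ti -> derives B (Ci ++ Q) q) Cs1 As ->
    Forall2 (fun (Cj : list A) (dj : A) => derives B Cj dj) Cs2 Ds ->
    Forall (persistent B) Ds ->
    (forall U v, In (U, v) S -> derives B (Ds ++ U) v) ->
    Permutation L (concat Cs1 ++ concat Cs2) ->
    derives B L p.

Fixpoint supp (B : base) (L : list A) (phi : formula) {struct phi} : Prop :=
  match phi with
  | Atom p => derives B L p
  | Lolli f g =>
      (* f ||-^L_B g, with the antecedent clause for a single formula *)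
      match f with
      | Bang d =>
          forall C : base, base_ext C B -> supp C [] d -> supp C L g
      | _ =>
          forall C : base, base_ext C B -> forall K,
            supp C K f -> supp C (L ++ K) g
      end
  | Tensor f g =>
      forall C : base, base_ext C B -> forall K p,
        (* f, g ||-^K_C p, with the antecedent clause for the multiset {f,g} *)
        (match f, g with
         | Bang d1, Bang d2 =>
             forall D : base, base_ext D C ->
               supp D [] d1 -> supp D [] d2 -> derives D K p
         | Bang d1, _ =>
             forall D : base, base_ext D C -> forall M,
               supp D [] d1 -> supp D M g -> derives D (K ++ M) p
         | _, Bang d2 =>
             forall D : base, base_ext D C -> forall M,
               supp D [] d2 -> supp D M f -> derives D (K ++ M) p
         | _, _ =>
             forall D : base, base_ext D C -> forall M,
               (exists M1 M2, Permutation M (M1 ++ M2) /\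
                  supp D M1 f /\ supp D M2 g) ->
               derives D (K ++ M) p
         end) ->
        derives C (L ++ K) p
  | One =>
      forall C : base, base_ext C B -> forall K p,
        derives C K p -> derives C (L ++ K) p
  | With f g => supp B L f /\ supp B L g
  | Plus f g =>
      forall C : base, base_ext C B -> forall K p,
        (* f ||-^K_C p *)
        (match f with
         | Bang d => forall D : base, base_ext D C -> supp D [] d -> derives D K p
         | _ => forall D : base, base_ext D C -> forall M,
                  supp D M f -> derives D (K ++ M) p
         end) ->
        (* g ||-^K_C p *)
        (match g with
         | Bang d => forall D : base, base_ext D C -> supp D [] d -> derives D K p
         | _ => forall D : base, base_ext D C -> forall M,
                  supp D M g -> derives D (K ++ M) p
         end) ->
        derives C (L ++ K) p
  | Zero => forall p K, derives B (L ++ K) p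
  | Top => True
  | Bang f =>
      forall C : base, base_ext C B -> forall K p,
        (forall D : base, base_ext D C -> supp D [] f -> derives D K p) ->
        derives C (L ++ K) p
  end.

Fixpoint supp_ctx (B : base) (L : list A) (G : list formula) : Prop :=
  match G with
  | [] => L = []     (* only used for the empty Theta (then K is empty) *)
  | [f] => supp B L f
  | f :: G' => exists K M, Permutation L (K ++ M) /\ supp B K f /\ supp_ctx B M G'
  end.

Definition is_bang (f : formula) : bool :=
  match f with Bang _ => true | _ => false end.

Definition bang_part (G : list formula) : list formula :=
  flat_map (fun f => match f with Bang d => [d] | _ => [] end) G.

Definition nonbang_part (G : list formula) : list formula :=
  filter (fun f => negb (is_bang f)) G.

(* general antecedent support  !Delta, Theta ||-^L_B phi  (Gamma nonempty) *)
Definition supp_ante (B : base) (L : list A) (G : list formula) (phi : formula) : Prop :=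
  forall C : base, base_ext C B -> forall K,
    (forall d, In d (bang_part G) -> supp C [] d) ->
    supp_ctx C K (nonbang_part G) ->
    supp C (L ++ K) phi.

End ILL.

(* The key fact is a !-elimination principle, proved by
   induction on [phi]: if [||-^K_C !d] and [phi] is supported at [K'] in every
   extension of [C] that supports [d], then [||-^{K,K'}_C phi].  It lets us
   consume the banged members of [Gamma] one at a time.  Conversely [||-_C d]
   yields [||-^{}_C !d], so supporting [!Delta] and [Theta] separately
   amounts to supporting [Gamma]. *)
From Stdlib Require Import List Permutation.
Import ListNotations.
Set Implicit Arguments.

Section Support.
Variable A : Type.

Lemma base_ext_refl (B : base A) : base_ext B B.
Proof. unfold base_ext; auto. Qed.

Lemma base_ext_trans (D C B : base A) :
  base_ext D C -> base_ext C B -> base_ext D B.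
Proof. unfold base_ext; auto. Qed.

Hint Resolve base_ext_refl base_ext_trans : core.

Lemma persistent_mono (B C : base A) :
  base_ext C B -> forall p, persistent B p -> persistent C p.
Proof. intros HC p [S [HS Hne]]. exists S; auto. Qed.

Fixpoint derives_mono (B C : base A) (HC : base_ext C B) (L : list A) (p : A)
  (d : derives B L p) {struct d} : derives C L p.
Proof.
  destruct d as [p | As S p Cs1 Cs2 Ds L HB Hprem HDs Hpers HS HL].
  - apply der_ref.
  - apply (@der_app A C As S p Cs1 Cs2 Ds L (HC _ HB)); auto.
    + clear - Hprem derives_mono HC.
      induction Hprem as [|Ci Ti Cs As' HCi _ IH]; constructor; auto.
      intros Q q Hin. exact (derives_mono B C HC _ _ (HCi Q q Hin)).
    + clear - HDs derives_mono HC.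
      induction HDs as [|Cj dj Cs Ds' HCj _ IH]; constructor; auto.
      exact (derives_mono B C HC _ _ HCj).
    + exact (Forall_impl _ (persistent_mono HC) Hpers).
    + intros U v Hin. exact (derives_mono B C HC _ _ (HS U v Hin)).
Qed.

Lemma derives_perm (B : base A) L L' p :
  derives B L p -> Permutation L L' -> derives B L' p.
Proof.
  intros d HP. destruct d as [p | As S p Cs1 Cs2 Ds L HB Hprem HDs Hpers HS HL].
  - apply Permutation_length_1_inv in HP. subst. apply der_ref.
  - eapply der_app; eauto. eapply perm_trans; [symmetry|]; eassumption.
Qed.

Lemma supp_perm (phi : formula A) : forall B L L',
  supp B L phi -> Permutation L L' -> supp B L' phi.
Proof.
  induction phi as [p| | | |phi1 _ phi2 IH2| |phi1 IH1 phi2 IH2| |];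
    intros B L L' H HP; simpl in *;
    try (intros; eapply derives_perm;
         [apply H; eauto | apply Permutation_app_tail; auto]).
  - eapply derives_perm; eauto.
  - auto.
  - destruct phi1; intros; eapply IH2; eauto using Permutation_app_tail.
  - destruct H; split; eauto.
Qed.

Lemma supp_mono (phi : formula A) : forall B C L,
  base_ext C B -> supp B L phi -> supp C L phi.
Proof.
  induction phi as [p| | | |phi1 _ phi2 _| |phi1 IH1 phi2 IH2| |];
    intros B C L HC H; simpl in *; try (intros; apply H; eauto; fail).
  - eapply derives_mono; eauto.
  - intros; eapply derives_mono; eauto.
  - destruct phi1; intros; apply H; eauto.
  - destruct H; split; eauto.
Qed.

Lemma supp_bang_intro (C : base A) d : supp C [] d -> supp C [] (Bang d).
Proof.
  intros Hd C' HC' K p Hk. apply Hk; auto. eapply supp_mono; eauto.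
Qed.

Lemma supp_bang_elim (d phi : formula A) : forall C K K',
  supp C K (Bang d) ->
  (forall D, base_ext D C -> supp D [] d -> supp D K' phi) ->
  supp C (K ++ K') phi.
Proof.
  (* Apart from [-o] and [&], the support clause of [phi] asks for atomic
     derivations in extensions [C'] of [C]; there the claim is the defining
     property of [!d], read in [C']. *)
  assert (Hatomic : forall C C' K K' K0 p,
    base_ext C' C -> supp C K (Bang d) ->
    (forall D, base_ext D C' -> supp D [] d -> derives D (K' ++ K0) p) ->
    derives C' ((K ++ K') ++ K0) p).
  { intros C C' K K' K0 p HC' Hb Hk. rewrite <- app_assoc.
    exact (supp_mono _ _ HC' Hb _ (base_ext_refl C') _ _ Hk). }
  induction phi as [p| | | |phi1 _ phi2 IH2|phi1 _ phi2 _|phi1 IH1 phi2 IH2|phi1 _ phi2 _|phi _];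
    intros C K K' Hb Hk; simpl.
  - apply Hb; auto.
  - auto.
  - intros p K0. apply Hatomic with C; auto.
    intros D HD Hd. exact (Hk D HD Hd p K0).
  - intros C' HC' K0 p Hp. apply Hatomic with C; auto.
    intros D HD Hd. refine (Hk D _ Hd D _ K0 p _); eauto using derives_mono.
  - destruct phi1 as [| | | | | | | |e].
    9: { intros C' HC' He. apply IH2; [eapply supp_mono; eauto|].
         intros D HD Hd. refine (Hk D _ Hd D _ _); [eauto..|].
         exact (supp_mono _ _ HD He). }
    all: intros C' HC' K0 H1; rewrite <- app_assoc;
      apply IH2; [eapply supp_mono; eauto|];
      intros D HD Hd; refine (Hk D _ Hd D _ _ _); [eauto..|].
    all: exact (supp_mono _ _ HD H1).
  - intros C' HC' K0 p Hp. apply Hatomic with C; auto.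
    intros D HD Hd. refine (Hk D _ Hd D _ K0 p _); [eauto..|].
    destruct phi1, phi2; intros; apply Hp; eauto.
  - split; [apply IH1 | apply IH2]; auto; intros D HD Hd; apply Hk; auto.
  - intros C' HC' K0 p Hp1 Hp2. apply Hatomic with C; auto.
    intros D HD Hd. refine (Hk D _ Hd D _ K0 p _ _); [eauto..| |].
    + destruct phi1; intros; apply Hp1; eauto.
    + destruct phi2; intros; apply Hp2; eauto.
  - intros C' HC' K0 p Hp. apply Hatomic with C; auto.
    intros D HD Hd. refine (Hk D _ Hd D _ K0 p _); [eauto..|].
    intros; apply Hp; eauto.
Qed.

Lemma supp_ctx_cons (B : base A) K M f G :
  supp B K f -> supp_ctx B M G -> supp_ctx B (K ++ M) (f :: G).
Proof.
  intros Hf HG. destruct G as [|g G].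
  - simpl in HG. subst. rewrite app_nil_r. exact Hf.
  - exists K, M. auto.
Qed.

Lemma supp_ctx_uncons (B : base A) K f G :
  supp_ctx B K (f :: G) ->
  exists K1 M, Permutation K (K1 ++ M) /\ supp B K1 f /\ supp_ctx B M G.
Proof.
  destruct G as [|g G]; [|auto].
  intros Hf. exists K, []. rewrite app_nil_r. repeat split; auto.
Qed.

Lemma supp_ctx_perm (B : base A) K K' G :
  supp_ctx B K G -> Permutation K K' -> supp_ctx B K' G.
Proof.
  intros H HP. destruct G as [|f [|g G]]; simpl in *.
  - subst. apply Permutation_nil. exact HP.
  - eapply supp_perm; eauto.
  - destruct H as [K1 [M [HK H]]]. exists K1, M.
    split; auto. eapply perm_trans; [symmetry|]; eassumption.
Qed.

Lemma supp_ctx_mono (G : list (formula A)) : forall (B C : base A) K,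
  base_ext C B -> supp_ctx B K G -> supp_ctx C K G.
Proof.
  induction G as [|f G IH]; intros B C K HC H; [exact H|].
  apply supp_ctx_uncons in H as (K1 & M & HK & Hf & HG).
  eapply supp_ctx_perm; [|symmetry; exact HK].
  apply supp_ctx_cons; eauto using supp_mono.
Qed.

Lemma bang_part_cons_nonbang (f : formula A) G :
  is_bang f = false -> bang_part (f :: G) = bang_part G.
Proof. destruct f; easy. Qed.

Lemma nonbang_part_cons_nonbang (f : formula A) G :
  is_bang f = false -> nonbang_part (f :: G) = f :: nonbang_part G.
Proof. intros E. unfold nonbang_part. simpl. rewrite E. reflexivity. Qed.

Lemma bang_or_nonbang (f : formula A) : (exists d, f = Bang d) \/ is_bang f = false.
Proof. destruct f; eauto. Qed.

Lemma supp_ctx_elim (G : list (formula A)) : forall L C K phi,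
  supp_ctx C K G ->
  (forall D, base_ext D C -> forall K',
     (forall d, In d (bang_part G) -> supp D [] d) ->
     supp_ctx D K' (nonbang_part G) -> supp D (L ++ K') phi) ->
  supp C (L ++ K) phi.
Proof.
  induction G as [|f G IH]; intros L C K phi HG Hphi.
  - simpl in HG. subst. apply Hphi; simpl; auto. contradiction.
  - apply supp_ctx_uncons in HG as (K1 & M & HK & Hf & HM).
    destruct (bang_or_nonbang f) as [[d ->]|Ef].
    + apply supp_perm with (K1 ++ (L ++ M)).
      2:{ rewrite HK, !app_assoc. apply Permutation_app_tail, Permutation_app_comm. }
      apply (supp_bang_elim _ _ Hf). intros D HD Hd.
      apply IH; [eapply supp_ctx_mono; eauto|].
      intros D' HD' K' Hbang Hnonbang. apply Hphi; eauto.
      intros d0 [<-|Hin]; eauto using supp_mono.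
    + apply supp_perm with ((L ++ K1) ++ M).
      2:{ rewrite HK, app_assoc. reflexivity. }
      apply IH; [exact HM|].
      intros D HD K' Hbang Hnonbang. rewrite <- app_assoc. apply Hphi; auto.
      * rewrite bang_part_cons_nonbang; auto.
      * rewrite nonbang_part_cons_nonbang; auto.
        apply supp_ctx_cons; eauto using supp_mono.
Qed.

Lemma supp_ctx_of_parts (G : list (formula A)) : forall C K,
  (forall d, In d (bang_part G) -> supp C [] d) ->
  supp_ctx C K (nonbang_part G) -> supp_ctx C K G.
Proof.
  induction G as [|f G IH]; intros C K Hbang Hnonbang; [exact Hnonbang|].
  destruct (bang_or_nonbang f) as [[d ->]|Ef].
  - change K with ([] ++ K). apply supp_ctx_cons.
    + apply supp_bang_intro, Hbang. left. reflexivity.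
    + apply IH; auto. intros d0 Hin. apply Hbang. right. exact Hin.
  - rewrite bang_part_cons_nonbang in Hbang by exact Ef.
    rewrite nonbang_part_cons_nonbang in Hnonbang by exact Ef.
    apply supp_ctx_uncons in Hnonbang as (K1 & M & HK & Hf & HM).
    eapply supp_ctx_perm; [|symmetry; exact HK].
    apply supp_ctx_cons; auto.
Qed.

End Support.

Theorem theorem5 (A : Type) (B : base A) (L : list A) (G : list (formula A))
  (phi : formula A) :
  G <> [] ->
  (supp_ante B L G phi <->
   (forall C : base A, base_ext C B -> forall K : list A,
      supp_ctx C K G -> supp C (L ++ K) phi)).
Proof.
  intros _. split.
  - intros Hante C HC K HG. apply supp_ctx_elim with G; [exact HG|].
    intros D HD K'. apply Hante. eapply base_ext_trans; eauto.
  - intros Hctx C HC K Hbang Hnonbang. apply Hctx; auto.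
    apply supp_ctx_of_parts; auto.
Qed.
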